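(* There exists a deal and a legal game that is a tranca mínima (as defined in the context) in which the winning team obtains $107$ points.
   Context: Domino tiles: the set of tiles consists of the 28 unordered pairs $[a,b]=[b,a]$ with $a,b\in\{0,1,\dots,6\}$; the number of points (pips) of $[a,b]$ is $a+b$. Four players, numbered 1 to 4, play; players 1 and 3 form one team and players 2 and 4 the other. The 28 tiles are dealt, 7 to each player (the initial hands). Players take turns in cyclic order $1,2,3,4,1,\dots$. The starting player places any one of their tiles on the table, forming a line of tiles (the board) with two open ends. On each subsequent turn, the player whose turn it is must, if they hold a tile containing a number equal to the number shown at one of the two open ends, place such a tile at that end (with equal numbers adjacent), the other number of the tile becoming the new open end; if they hold no such tile, they pass. A game ends either when a player places their last tile, or in a tranca (blocked game): a position in which no player holds a tile that can be placed. In a game ending in a tranca, the team whose two players' remaining tiles have the smaller total number of pips wins, and it obtains as points the total number of pips on the tiles remaining in the hands of the two players of the other (losing) team. A tranca mínima is a game ending in a tranca in which the total number of pips on the tiles of the board at the end of the game is $42$. *)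

From mathcomp Require Import all_boot.
Set Implicit Arguments. Unset Strict Implicit. Unset Printing Implicit Defensive.

(* A tile [a,b] is represented by the normalized pair (a,b) with a <= b <= 6. *)
Definition tile := (nat * nat)%type.

Definition all_tiles : seq tile :=
  [seq (a, b) | a <- iota 0 7, b <- iota a (7 - a)].

Definition pips (t : tile) : nat := t.1 + t.2.
Definition pips_seq (s : seq tile) : nat := sumn (map pips s).

(* Players 1..4 are represented by 'I_4 (player k+1 <-> index k);
   team of players 1,3 is team 0, team of players 2,4 is team 1. *)
Definition team (i : 'I_4) : nat := i %% 2.

Definition hands := 'I_4 -> seq tile.

Definition valid_deal (h : hands) : Prop :=
  (forall i, size (h i) = 7) /\
  perm_eq (flatten [seq h i | i <- enum 'I_4]) all_tiles.

(* Game state after the first tile has been placed. *)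
Record state := State {
  st_hands : hands;
  st_left  : nat;
  st_right : nat;
  st_board : seq tile }.

Definition has_num (t : tile) (x : nat) : bool := (t.1 == x) || (t.2 == x).
Definition other_num (t : tile) (x : nat) : nat := if t.1 == x then t.2 else t.1.

Definition fits (s : state) (t : tile) : bool :=
  has_num t (st_left s) || has_num t (st_right s).

Definition can_play (s : state) (i : 'I_4) : bool := has (fits s) (st_hands s i).

Definition blocked (s : state) : Prop := forall i, ~~ can_play s i.

Definition all_nonempty (s : state) : Prop := forall i, st_hands s i != [::].

Definition remove_tile (h : hands) (i : 'I_4) (t : tile) : hands :=
  fun j => if j == i then rem t (h i) else h j.

Inductive move := Pass | PlayLeft of tile | PlayRight of tile.

Definition legal_move (i : 'I_4) (s : state) (m : move) (s' : state) : Prop :=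
  match m with
  | Pass => ~~ can_play s i /\ s' = s
  | PlayLeft t =>
      t \in st_hands s i /\ has_num t (st_left s) /\
      s' = State (remove_tile (st_hands s) i t)
                 (other_num t (st_left s)) (st_right s) (t :: st_board s)
  | PlayRight t =>
      t \in st_hands s i /\ has_num t (st_right s) /\
      s' = State (remove_tile (st_hands s) i t)
                 (st_left s) (other_num t (st_right s)) (rcons (st_board s) t)
  end.

Definition player_of (n : nat) : 'I_4 := Ordinal (ltn_pmod n (isT : 0 < 4)).

(* [play_to_tranca n s ms sf]: starting at turn n (player n mod 4) in state s,
   the moves ms are played legally, the game does not end before they are all
   played (no hand becomes empty, no tranca position is reached earlier), and
   the final state sf is a tranca in which no player has emptied his hand. *)
Fixpoint play_to_tranca (n : nat) (s : state) (ms : seq move) (sf : state) : Prop :=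
  match ms with
  | [::] => s = sf /\ blocked s /\ all_nonempty s
  | m :: ms' => all_nonempty s /\ ~ blocked s /\
      exists s', legal_move (player_of n) s m s' /\ play_to_tranca n.+1 s' ms' sf
  end.

Definition tranca_game (h : hands) (t0 : tile) (ms : seq move) (sf : state) : Prop :=
  valid_deal h /\ t0 \in h ord0 /\
  play_to_tranca 1 (State (remove_tile h ord0 t0) t0.1 t0.2 [:: t0]) ms sf.

Definition team_pips (s : state) (k : nat) : nat :=
  \sum_(i < 4 | team i == k) pips_seq (st_hands s i).

Definition tranca_minima (sf : state) : Prop := pips_seq (st_board sf) = 42.

Definition team_wins_with (sf : state) (k pts : nat) : Prop :=
  k < 2 /\ team_pips sf k < team_pips sf (1 - k) /\ pts = team_pips sf (1 - k).

From mathcomp Require Import all_boot.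

(* Both open ends end up showing 0 while all seven 0-tiles lie on the board,
   so nobody can move: a tranca.  The ten tiles played are the seven 0-tiles
   together with [1,3], [2,4] and [5,6], 42 pips in all, leaving 168 - 42 = 126
   pips in hand.  The deal gives players 2 and 4 the heavy tiles, so they are
   left holding 107 of them and players 1 and 3 win with 107 points. *)

Definition players : seq 'I_4 :=
  [:: Ordinal (isT : 0 < 4); Ordinal (isT : 1 < 4);
      Ordinal (isT : 2 < 4); Ordinal (isT : 3 < 4)].

(* [enum 'I_4] does not reduce by evaluation, hence the explicit list. *)
Lemma enum_players : enum 'I_4 = players.
Proof. by apply: (inj_map val_inj); rewrite val_enum_ord. Qed.

Lemma index_enum_players : index_enum 'I_4 = players.
Proof. by rewrite [index_enum _]unlock -enumT enum_players. Qed.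

Lemma all_playersP (P : pred 'I_4) : reflect (forall i, P i) (all P players).
Proof.
apply: (iffP allP) => [HP i | HP i _]; last exact: HP.
by apply: HP; rewrite -enum_players mem_enum.
Qed.

Definition blockedb (s : state) : bool := all (fun i => ~~ can_play s i) players.

Definition all_nonemptyb (s : state) : bool :=
  all (fun i => st_hands s i != [::]) players.

Definition legalb (i : 'I_4) (s : state) (m : move) : bool :=
  match m with
  | Pass => ~~ can_play s i
  | PlayLeft t => (t \in st_hands s i) && has_num t (st_left s)
  | PlayRight t => (t \in st_hands s i) && has_num t (st_right s)
  end.

Definition next_state (i : 'I_4) (s : state) (m : move) : state :=
  match m with
  | Pass => s
  | PlayLeft t => State (remove_tile (st_hands s) i t)
                    (other_num t (st_left s)) (st_right s) (t :: st_board s)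
  | PlayRight t => State (remove_tile (st_hands s) i t)
                    (st_left s) (other_num t (st_right s)) (rcons (st_board s) t)
  end.

Lemma legal_move_next i s m : legalb i s m -> legal_move i s m (next_state i s m).
Proof. by case: m => [|t|t] /=; [move=> -> | case/andP=> -> -> ..]. Qed.

Fixpoint final_state (n : nat) (s : state) (ms : seq move) : state :=
  if ms is m :: ms' then final_state n.+1 (next_state (player_of n) s m) ms'
  else s.

Fixpoint tranca_playb (n : nat) (s : state) (ms : seq move) : bool :=
  if ms is m :: ms' then
    [&& all_nonemptyb s, ~~ blockedb s, legalb (player_of n) s m
      & tranca_playb n.+1 (next_state (player_of n) s m) ms']
  else blockedb s && all_nonemptyb s.

Lemma play_to_tranca_final n s ms :
  tranca_playb n s ms -> play_to_tranca n s ms (final_state n s ms).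
Proof.
elim: ms n s => [|m ms IH] n s /=.
  by case/andP=> /all_playersP blocked_s /all_playersP nonempty_s.
case/and4P=> /all_playersP nonempty_s /all_playersP not_blocked /legal_move_next legal.
by move=> /IH play; split=> //; split=> //; exists (next_state (player_of n) s m).
Qed.

Lemma team_pipsE s k :
  team_pips s k = \sum_(i <- players | team i == k) pips_seq (st_hands s i).
Proof. by rewrite /team_pips index_enum_players. Qed.

Definition deal : hands := nth [::]
  [:: [:: (0,0); (0,6); (1,3); (0,4); (0,2); (1,4); (2,3)];
      [:: (5,6); (6,6); (5,5); (2,6); (1,6); (2,5); (1,5)];
      [:: (0,1); (0,5); (0,3); (2,4); (2,2); (1,2); (1,1)];
      [:: (4,6); (3,6); (4,5); (3,5); (4,4); (3,4); (3,3)]].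

Definition opening : tile := (0,0).

Definition game : seq move :=
  [:: Pass; PlayLeft (0,1); Pass; PlayRight (0,6); PlayRight (5,6);
      PlayRight (0,5); Pass; PlayLeft (1,3); Pass; PlayLeft (0,3); Pass;
      PlayLeft (0,4); Pass; PlayLeft (2,4); Pass; PlayLeft (0,2)].

Definition start : state :=
  State (remove_tile deal ord0 opening) opening.1 opening.2 [:: opening].

Definition final : state := final_state 1 start game.

Lemma valid_deal_deal : valid_deal deal.
Proof.
split; first by move=> i; apply/eqP; move: i; apply/all_playersP.
by rewrite enum_players; vm_compute.
Qed.

Theorem mainTheorem8 :
  exists (h : hands) (t0 : tile) (ms : seq move) (sf : state),
    tranca_game h t0 ms sf /\ tranca_minima sf /\
    exists k, team_wins_with sf k 107.
Proof.
exists deal, opening, game, final.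
split; [split; [exact: valid_deal_deal | split] | split].
- by vm_compute.
- by apply: play_to_tranca_final; vm_compute.
- by vm_compute.
- exists 0; rewrite /team_wins_with !team_pipsE unlock.
  by vm_compute.
Qed.
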